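(* Let $\Delta:M_n\to M_n$ be a weak-2-local derivation, let $p_1,\ldots,p_n$ be mutually orthogonal minimal projections in $M_n$, and let $q=1-p_n$. Let $R\subseteq\{1,\ldots,n-1\}$ and set $r=\sum_{i\in R}p_i$ if $R\neq\emptyset$ and $r=0$ if $R=\emptyset$. Assume $\Delta(qaq+rap_n)=0$ for every $a\in M_n$, and $\Delta(e_{kn})=0$ for some $1\le k\le n-1$. Then $\Delta(qaq+rap_n+\lambda e_{kn})=0$ for every $a\in M_n$ and $\lambda\in\mathbb{C}$.
   Context: $M_n=M_n(\mathbb{C})$. For $i,j$, $e_{ij}$ is the unique minimal partial isometry in $M_n$ with $e_{ij}^*e_{ij}=p_j$ and $e_{ij}e_{ij}^*=p_i$. A derivation on $M_n$ is a linear map $D$ with $D(ab)=D(a)b+aD(b)$. A (not necessarily linear) map $\Delta:M_n\to M_n$ is a weak-2-local derivation if for every $a,b\in M_n$ and every $\phi\in M_n^*$ there exists a derivation $D_{a,b,\phi}$ such that $\phi\Delta(a)=\phi D_{a,b,\phi}(a)$ and $\phi\Delta(b)=\phi D_{a,b,\phi}(b)$. *)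

From mathcomp Require Import all_boot all_algebra.
From mathcomp Require Import complex Rstruct.
Set Implicit Arguments. Unset Strict Implicit. Unset Printing Implicit Defensive.
Import GRing.Theory Num.Theory.
Local Open Scope ring_scope.

Definition C : numClosedFieldType := (Rdefinitions.R)[i].

Definition adj_mx (m : nat) (A : 'M[C]_m) : 'M[C]_m := (map_mx (@conjc _) A)^T.

Definition is_proj (m : nat) (p : 'M[C]_m) : Prop :=
  adj_mx p = p /\ p *m p = p.

(* Minimal projection: a nonzero projection whose only subprojections
   (projections e with e <= p, i.e. e p = e) are 0 and p. *)
Definition is_min_proj (m : nat) (p : 'M[C]_m) : Prop :=
  is_proj p /\ p != 0 /\
  forall e : 'M[C]_m, is_proj e -> e *m p = e -> e = 0 \/ e = p.

Definition is_linear_map (m : nat) (D : 'M[C]_m -> 'M[C]_m) : Prop :=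
  forall (c : C) (x y : 'M[C]_m), D (c *: x + y) = c *: D x + D y.

Definition is_linear_functional (m : nat) (phi : 'M[C]_m -> C) : Prop :=
  forall (c : C) (x y : 'M[C]_m), phi (c *: x + y) = c * phi x + phi y.

Definition is_derivation (m : nat) (D : 'M[C]_m -> 'M[C]_m) : Prop :=
  is_linear_map D /\ forall a b : 'M[C]_m, D (a *m b) = D a *m b + a *m D b.

Definition is_weak_2_local_derivation (m : nat) (Delta : 'M[C]_m -> 'M[C]_m)
  : Prop :=
  forall (a b : 'M[C]_m) (phi : 'M[C]_m -> C), is_linear_functional phi ->
    exists D : 'M[C]_m -> 'M[C]_m, is_derivation D /\
      phi (Delta a) = phi (D a) /\ phi (Delta b) = phi (D b).

(* For a derivation D of M_m, tr o D vanishes: D 1 = 0, and tr o D kills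
   commutators, which together with 1 span M_m (e_ij = e_i0 e_0j).  Hence
   tr (D (w x)) = tr (x D w) + tr (w D x) makes the trace form
   (x, w) |-> tr (w D x) skew-symmetric.  A weak-2-local derivation Delta agrees
   with derivations on x and w when tested against tr (x _) and tr ((x + w) _),
   so it inherits this skew-symmetry.  By nondegeneracy of the trace form,
   Delta x = 0 iff tr (x Delta w) = 0 for all w, a condition linear in x: the
   zero set of Delta is a subspace. *)

From HB Require Import structures.
From mathcomp Require Import all_boot all_algebra.
From mathcomp Require Import complex Rstruct.
Import GRing.Theory Num.Theory.
Local Open Scope ring_scope.

Lemma mxtrace_delta_mull {m : nat} (i j : 'I_m) (M : 'M[C]_m) :
  \tr (delta_mx j i *m M) = M i j.
Proof.
rewrite /mxtrace (bigD1 j) //= big1 ?addr0 => [|l ne_lj].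
  rewrite mxE (bigD1 i) //= big1 ?addr0; first by rewrite mxE !eqxx mul1r.
  by move=> l ne_li; rewrite mxE eqxx (negbTE ne_li) mul0r.
by rewrite mxE big1 // => l' _; rewrite mxE (negbTE ne_lj) mul0r.
Qed.

Lemma trace_form_nondeg {m : nat} (M : 'M[C]_m) :
  (forall w, \tr (w *m M) = 0) -> M = 0.
Proof.
by move=> trM0; apply/matrixP => i j; rewrite mxE -mxtrace_delta_mull trM0.
Qed.

Lemma mxtrace_mulDl {m : nat} (x w M : 'M[C]_m) :
  \tr ((x + w) *m M) = \tr (x *m M) + \tr (w *m M).
Proof. by rewrite mulmxDl mxtraceD. Qed.

Lemma trace_form_linear {m : nat} (y : 'M[C]_m) :
  is_linear_functional (fun v => \tr (y *m v)).
Proof. by move=> c a b; rewrite mulmxDr -scalemxAr mxtraceD mxtraceZ. Qed.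

Section DerivationTrace.

Context {m : nat} {D : 'M[C]_m.+1 -> 'M[C]_m.+1}.
Hypothesis derD : is_derivation D.

HB.instance Definition _ := GRing.isLinear.Build C _ _ *:%R D derD.1.

Lemma derivation1 : D 1%:M = 0.
Proof.
have := derD.2 1%:M 1%:M; rewrite !mulmx1 mul1mx => D1_idem.
by apply: (addrI (D 1%:M)); rewrite addr0 -D1_idem.
Qed.

Lemma derivation_trace_comm a b : \tr (D (a *m b)) = \tr (D (b *m a)).
Proof.
rewrite !derD.2 !mxtraceD addrC.
by rewrite [\tr (D a *m b)]mxtrace_mulC [\tr (a *m D b)]mxtrace_mulC.
Qed.

Lemma derivation_trace_delta_diag i : \tr (D (delta_mx i i)) = 0.
Proof.
have diag_const j : \tr (D (delta_mx j j)) = \tr (D (delta_mx 0 0)).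
  by rewrite -(mul_delta_mx (0 : 'I_m.+1) j j) derivation_trace_comm mul_delta_mx.
have : \tr (D 1%:M) = m.+1%:R * \tr (D (delta_mx 0 0)).
  rewrite mx1_sum_delta !linear_sum /=.
  by under eq_bigr => j _ do rewrite diag_const; rewrite sumr_const card_ord mulr_natl.
rewrite derivation1 linear0 diag_const => /esym/eqP.
by rewrite mulf_eq0 pnatr_eq0 => /eqP.
Qed.

Lemma derivation_trace_delta_offdiag i j : i != j -> \tr (D (delta_mx i j)) = 0.
Proof.
move=> ne_ij; rewrite -(mul_delta_mx (0 : 'I_m.+1) i j) derivation_trace_comm.
by rewrite mul_delta_mx_cond eq_sym (negbTE ne_ij) mulr0n !linear0.
Qed.

Lemma derivation_trace0 v : \tr (D v) = 0.
Proof.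
rewrite [v]matrix_sum_delta !linear_sum big1 // => i _.
rewrite !linear_sum big1 // => j _; rewrite !linearZ /=.
have [<-|ne_ij] := eqVneq i j.
  by rewrite derivation_trace_delta_diag mulr0.
by rewrite derivation_trace_delta_offdiag ?mulr0.
Qed.

Lemma derivation_trace_skew x w : \tr (w *m D x) = - \tr (x *m D w).
Proof.
have := derivation_trace0 (w *m x); rewrite derD.2 mxtraceD mxtrace_mulC.
by move/eqP; rewrite addrC addr_eq0 => /eqP.
Qed.

Lemma derivation_trace_alt x : \tr (x *m D x) = 0.
Proof.
have /eqP := derivation_trace_skew x x.
by rewrite -addr_eq0 -mulr2n mulrn_eq0 /= => /eqP.
Qed.

End DerivationTrace.

Section Weak2LocalDerivation.

Context {m : nat} {Delta : 'M[C]_m.+1 -> 'M[C]_m.+1}.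
Hypothesis w2l : is_weak_2_local_derivation Delta.

Lemma weak_2_local_trace_alt x : \tr (x *m Delta x) = 0.
Proof.
have [D [derD [/= -> _]]] := w2l x x _ (trace_form_linear x).
exact: (derivation_trace_alt derD).
Qed.

Lemma weak_2_local_trace_skew x w : \tr (w *m Delta x) = - \tr (x *m Delta w).
Proof.
have [D [derD [/= Dx Dw]]] := w2l x w _ (trace_form_linear (x + w)).
move: Dx Dw; rewrite !mxtrace_mulDl !weak_2_local_trace_alt.
rewrite !(derivation_trace_alt derD) => /addrI -> /addIr ->.
exact: (derivation_trace_skew derD).
Qed.

Lemma weak_2_local_zeroE x : (Delta x = 0) <-> forall w, \tr (x *m Delta w) = 0.
Proof.
split=> [Dx0 w | trx0].
  by apply/oppr_inj; rewrite -weak_2_local_trace_skew Dx0 mulmx0 linear0 oppr0.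
by apply: trace_form_nondeg => w; rewrite weak_2_local_trace_skew trx0 oppr0.
Qed.

Lemma weak_2_local_zero_lin x y c :
  Delta x = 0 -> Delta y = 0 -> Delta (x + c *: y) = 0.
Proof.
move=> /weak_2_local_zeroE Dx0 /weak_2_local_zeroE Dy0.
apply/weak_2_local_zeroE => w.
by rewrite mxtrace_mulDl -scalemxAl mxtraceZ Dx0 Dy0 mulr0 addr0.
Qed.

End Weak2LocalDerivation.

Theorem lemma2p6 (n : nat) (Delta : 'M[C]_n.+1 -> 'M[C]_n.+1)
  (p : 'I_n.+1 -> 'M[C]_n.+1) (R : {set 'I_n.+1}) (k : 'I_n.+1)
  (ekn : 'M[C]_n.+1) :
  is_weak_2_local_derivation Delta ->
  (forall i, is_min_proj (p i)) ->
  (forall i j, i != j -> p i *m p j = 0) ->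
  ord_max \notin R ->
  k != ord_max ->
  adj_mx ekn *m ekn = p ord_max ->
  ekn *m adj_mx ekn = p k ->
  let q := 1%:M - p ord_max in
  let r := \sum_(i in R) p i in
  (forall a : 'M[C]_n.+1, Delta (q *m a *m q + r *m a *m p ord_max) = 0) ->
  Delta ekn = 0 ->
  forall (a : 'M[C]_n.+1) (lambda : C),
    Delta (q *m a *m q + r *m a *m p ord_max + lambda *: ekn) = 0.
Proof.
move=> w2l _ _ _ _ _ _ q r Delta_qr Delta_ekn a lambda.
exact: weak_2_local_zero_lin.
Qed.
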